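(* Let $\mathbf{c}\in\mathbb{R}^n_{\ge0}$, $0<r\le 1$ with $\|\mathbf{c}\|_1\le r$, and let $M>0$. Then $$\frac{\Psi_n(1,r)}{\Psi_n\big(1+\tfrac nM,\ r(1+\tfrac nM)\big)}\ge\Big(\frac{M}{M+n}\Big)^{2n}.$$
   Context: Given $\mathbf{c}=(c_1,\dots,c_n)$, define $\Psi_0(u,v)=1$ if $u\ge0$ and $v\ge0$, and $0$ otherwise, and inductively for $i=1,\dots,n$, $\Psi_i(u,v)=\int_{-1}^1\Psi_{i-1}(u-|s|,\,v-|s-c_i|)\,ds$ for $u,v\in\mathbb{R}$. *)

From Stdlib Require Import Reals Lra ClassicalEpsilon.
Open Scope R_scope.

(* Riemann integral of f on [a,b]: the value RiemannInt pr for any proof pr of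
   Riemann integrability (all such proofs give the same value); an unspecified
   real if f is not Riemann integrable on [a,b]. *)
Definition Rint (f : R -> R) (a b : R) : R :=
  epsilon (inhabits 0) (fun I => exists pr : Riemann_integrable f a b, RiemannInt pr = I).

Definition Psi0 (u v : R) : R :=
  if Rle_dec 0 u then (if Rle_dec 0 v then 1 else 0) else 0.

(* c is 0-indexed: the paper's c_i is (c (i-1)).
   Psi c (S i) u v = \int_{-1}^{1} Psi c i (u - |s|) (v - |s - c_{i+1}|) ds. *)
Fixpoint Psi (c : nat -> R) (i : nat) (u v : R) : R :=
  match i with
  | O => Psi0 u v
  | S k => Rint (fun s => Psi c k (u - Rabs s) (v - Rabs (s - c k))) (-1) 1
  end.

Fixpoint l1norm (c : nat -> R) (n : nat) : R :=
  match n with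
  | O => 0
  | S k => l1norm c k + Rabs (c k)
  end.

From Stdlib Require Import Reals Lra Lia ClassicalEpsilon.
From Coquelicot Require Import Coquelicot.
Open Scope R_scope.

(* Psi_k is an iterated integral of an indicator function, so it is nonnegative and monotone
   in (u, v); Psi_1 is the length of an intersection of intervals, and by induction every
   Psi_(k+1) is Lipschitz, which makes all the integrands Riemann integrable.
   Substituting s = a y + b c_k in the last integral and using the triangle inequality gives
     a^k Psi_k(u, v) <= Psi_k(a u + b |c|_1, a v + (1 - a - b) |c|_1),
   and with la = 1 + n/M, a = 1/(2 la - 1), b = a (la - 1) the right-hand side at (la, r la)
   is at most Psi_n(1, r).  Finally 1/(2 la - 1) >= 1/la^2 = (M/(M+n))^2, while
   Psi_n(la, r la) > 0 because the integrand is bounded below on a small box. *)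

Lemma Rint_RInt f a b : ex_RInt f a b -> Rint f a b = RInt f a b.
Proof.
  intros Hf. unfold Rint.
  assert (E : exists I, exists pr : Riemann_integrable f a b, RiemannInt pr = I)
    by (exists (RiemannInt (ex_RInt_Reals_0 _ _ _ Hf)); eexists; reflexivity).
  destruct (epsilon_spec (inhabits 0) _ E) as [pr <-].
  symmetry. apply RInt_Reals.
Qed.

Definition indicator (p q s : R) : R :=
  if Rle_dec p s then if Rle_dec s q then 1 else 0 else 0.

Definition overlap (p q a b : R) : R := Rmax 0 (Rmin q b - Rmax p a).

Ltac Rcases :=
  unfold Rmin, Rmax in *; repeat destruct Rle_dec;
  repeat match goal with H : ~ _ <= _ |- _ => apply Rnot_le_lt in H end; lra.

Lemma is_RInt_indicator p q a b :
  a <= b -> is_RInt (indicator p q) a b (overlap p q a b).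
Proof.
  intros Hab.
  assert (piece : forall x y k, x <= y ->
    (forall s, x < s < y -> indicator p q s = k) -> is_RInt (indicator p q) x y ((y - x) * k)).
  { intros x y k Hxy Hk. change ((y - x) * k) with (scal (y - x) k).
    apply (is_RInt_ext (fun _ => k)); [|exact (is_RInt_const x y k)].
    intros s Hs. rewrite Rmin_left, Rmax_right in Hs by lra. symmetry. apply Hk, Hs. }
  (* [indicator p q] is 0, 1, 0 on the pieces of [a,b] cut at the clamped endpoints *)
  set (p' := Rmin b (Rmax a p)). set (q' := Rmax p' (Rmin b q)).
  replace (overlap p q a b)
    with (plus (plus ((p' - a) * 0) ((q' - p') * 1)) ((b - q') * 0))
    by (unfold plus, overlap; simpl; subst q' p'; Rcases).
  apply (is_RInt_Chasles (V := R_NormedModule) _ a q' b);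
    [apply (is_RInt_Chasles (V := R_NormedModule) _ a p' q')|];
    apply piece; unfold indicator; subst q' p'; intros; Rcases.
Qed.

Lemma ex_RInt_indicator p q a b : ex_RInt (indicator p q) a b.
Proof.
  destruct (Rle_dec a b).
  - eexists. apply is_RInt_indicator; assumption.
  - apply ex_RInt_swap. eexists. apply is_RInt_indicator; lra.
Qed.

Lemma Psi0_indicator u v e s :
  Psi0 (u - Rabs s) (v - Rabs (s - e)) = indicator (Rmax (- u) (e - v)) (Rmin u (e + v)) s.
Proof.
  assert (Hu : 0 <= u - Rabs s <-> - u <= s <= u)
    by (rewrite <- Rabs_le_between; lra).
  assert (Hv : 0 <= v - Rabs (s - e) <-> e - v <= s <= e + v)
    by (rewrite <- Rabs_le_between'; lra).
  unfold Psi0, indicator.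
  destruct (Rle_dec 0 (u - Rabs s)) as [hu|hu]; destruct (Rle_dec 0 (v - Rabs (s - e))) as [hv|hv];
    rewrite ?Hu, ?Hv in hu, hv; Rcases.
Qed.

Definition lipschitz2 (F : R -> R -> R) (K : R) : Prop :=
  forall u v u' v', F u v - F u' v' <= K * (Rabs (u - u') + Rabs (v - v')).

Lemma continuous_lipschitz (f : R -> R) K :
  0 <= K -> (forall x y, f x - f y <= K * Rabs (x - y)) -> forall z, continuous f z.
Proof.
  intros HK Hf z. apply continuity_pt_filterlim. intros eps Heps.
  exists (eps / (K + 1)). split; [apply Rdiv_lt_0_compat; lra|].
  intros x [_ Hx]. simpl in *. unfold R_dist in *.
  assert (K * Rabs (x - z) < eps).
  { replace eps with ((K + 1) * (eps / (K + 1))) by (field; lra).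
    pose proof (Rabs_pos (x - z)). nra. }
  pose proof (Hf x z). pose proof (Hf z x). rewrite Rabs_minus_sym in H1.
  apply Rabs_def1; lra.
Qed.

Lemma ex_RInt_lipschitz2 F K e u v a b :
  0 <= K -> lipschitz2 F K -> ex_RInt (fun s => F (u - Rabs s) (v - Rabs (s - e))) a b.
Proof.
  intros HK HF. apply (ex_RInt_continuous (V := R_CompleteNormedModule)).
  intros z _. apply (continuous_lipschitz _ (2 * K)); [lra|]. intros x y.
  eapply Rle_trans; [apply HF|].
  replace (2 * K * Rabs (x - y)) with (K * (2 * Rabs (x - y))) by ring.
  apply Rmult_le_compat_l; [exact HK|].
  pose proof (Rabs_triang_inv2 x y). pose proof (Rabs_triang_inv2 (x - e) (y - e)).
  replace (x - e - (y - e)) with (x - y) in H0 by ring.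
  replace (u - Rabs x - (u - Rabs y)) with (Rabs y - Rabs x) by ring.
  replace (v - Rabs (x - e) - (v - Rabs (y - e))) with (Rabs (y - e) - Rabs (x - e)) by ring.
  rewrite (Rabs_minus_sym (Rabs y)), (Rabs_minus_sym (Rabs (y - e))). lra.
Qed.

Lemma Rmax_lipschitz x y x' y' : Rabs (Rmax x y - Rmax x' y') <= Rabs (x - x') + Rabs (y - y').
Proof. unfold Rabs; repeat destruct Rcase_abs; Rcases. Qed.

Lemma Rmin_lipschitz x y x' y' : Rabs (Rmin x y - Rmin x' y') <= Rabs (x - x') + Rabs (y - y').
Proof. unfold Rabs; repeat destruct Rcase_abs; Rcases. Qed.

Lemma overlap_lipschitz p q p' q' a b :
  overlap p q a b - overlap p' q' a b <= Rabs (p - p') + Rabs (q - q').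
Proof.
  unfold overlap. pose proof (Rmax_lipschitz 0 (Rmin q b - Rmax p a) 0 (Rmin q' b - Rmax p' a)).
  pose proof (Rmin_lipschitz q b q' b). pose proof (Rmax_lipschitz p a p' a).
  rewrite Rminus_diag, Rabs_R0 in *.
  pose proof (Rabs_triang (Rmin q b - Rmin q' b) (- (Rmax p a - Rmax p' a))).
  rewrite Rabs_Ropp in H2.
  replace (Rmin q b - Rmax p a - (Rmin q' b - Rmax p' a))
    with (Rmin q b - Rmin q' b + - (Rmax p a - Rmax p' a)) in H by ring.
  pose proof (Rle_abs (Rmax 0 (Rmin q b - Rmax p a) - Rmax 0 (Rmin q' b - Rmax p' a))). lra.
Qed.

Lemma Psi_succ_RInt c k u v :
  ex_RInt (fun s => Psi c k (u - Rabs s) (v - Rabs (s - c k))) (-1) 1 ->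
  Psi c (S k) u v = RInt (fun s => Psi c k (u - Rabs s) (v - Rabs (s - c k))) (-1) 1.
Proof. apply Rint_RInt. Qed.

Lemma Psi1_overlap c u v :
  Psi c 1 u v = overlap (Rmax (- u) (c O - v)) (Rmin u (c O + v)) (-1) 1.
Proof.
  assert (E : forall s, Psi c 0 (u - Rabs s) (v - Rabs (s - c O))
                     = indicator (Rmax (- u) (c O - v)) (Rmin u (c O + v)) s)
    by (intros; apply Psi0_indicator).
  rewrite Psi_succ_RInt.
  - rewrite (RInt_ext _ _ _ _ (fun s _ => E s)). apply is_RInt_unique, is_RInt_indicator. lra.
  - apply (ex_RInt_ext _ _ _ _ (fun s _ => eq_sym (E s))), ex_RInt_indicator.
Qed.

Lemma Psi_lipschitz c k : lipschitz2 (Psi c (S k)) (2 ^ S k).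
Proof.
  induction k as [|k IH]; intros u v u' v'.
  - rewrite !Psi1_overlap. eapply Rle_trans; [apply overlap_lipschitz|].
    pose proof (Rmax_lipschitz (- u) (c O - v) (- u') (c O - v')).
    pose proof (Rmin_lipschitz u (c O + v) u' (c O + v')).
    replace (- u - - u') with (- (u - u')) in H by ring.
    replace (c O - v - (c O - v')) with (- (v - v')) in H by ring.
    replace (c O + v - (c O + v')) with (v - v') in H0 by ring.
    rewrite !Rabs_Ropp in H. simpl. lra.
  - assert (HK : 0 <= 2 ^ S k) by (apply pow_le; lra).
    assert (Hint : forall e u v,
      ex_RInt (fun s => Psi c (S k) (u - Rabs s) (v - Rabs (s - e))) (-1) 1)
      by (intros; apply ex_RInt_lipschitz2 with (2 ^ S k); assumption).
    rewrite (Psi_succ_RInt c (S k) u v), (Psi_succ_RInt c (S k) u' v') by apply Hint.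
    set (f := fun s => Psi c (S k) (u - Rabs s) (v - Rabs (s - c (S k)))).
    set (g := fun s => Psi c (S k) (u' - Rabs s) (v' - Rabs (s - c (S k)))).
    assert (Hfg : RInt f (-1) 1 - RInt g (-1) 1 = RInt (fun s => f s - g s) (-1) 1)
      by (symmetry; apply (RInt_minus f g); apply Hint).
    set (K := 2 ^ S k * (Rabs (u - u') + Rabs (v - v'))).
    rewrite Hfg. apply Rle_trans with (RInt (fun _ => K) (-1) 1).
    + apply RInt_le; [lra | apply (ex_RInt_minus f g); apply Hint | apply ex_RInt_const |].
      intros s _. unfold f, g.
      specialize (IH (u - Rabs s) (v - Rabs (s - c (S k))) (u' - Rabs s) (v' - Rabs (s - c (S k)))).
      replace (u - Rabs s - (u' - Rabs s)) with (u - u') in IH by ring.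
      replace (v - Rabs (s - c (S k)) - (v' - Rabs (s - c (S k)))) with (v - v') in IH by ring.
      unfold K. lra.
    + rewrite RInt_const. unfold K, scal; simpl; unfold mult; simpl. lra.
Qed.

Lemma ex_RInt_Psi c k e u v a b :
  ex_RInt (fun s => Psi c k (u - Rabs s) (v - Rabs (s - e))) a b.
Proof.
  destruct k as [|k].
  - apply (ex_RInt_ext (indicator (Rmax (- u) (e - v)) (Rmin u (e + v)))).
    + intros s _. symmetry. apply Psi0_indicator.
    + apply ex_RInt_indicator.
  - apply ex_RInt_lipschitz2 with (2 ^ S k); [apply pow_le; lra | apply Psi_lipschitz].
Qed.

Lemma Psi_succ c k u v :
  Psi c (S k) u v = RInt (fun s => Psi c k (u - Rabs s) (v - Rabs (s - c k))) (-1) 1.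
Proof. apply Psi_succ_RInt, ex_RInt_Psi. Qed.

Lemma Psi_ge0 c k u v : 0 <= Psi c k u v.
Proof.
  revert u v; induction k as [|k IH]; intros u v.
  - simpl. unfold Psi0. Rcases.
  - rewrite Psi_succ. apply RInt_ge_0; [lra | apply ex_RInt_Psi | intros; apply IH].
Qed.

Lemma Psi_monotone c k u v u' v' : u <= u' -> v <= v' -> Psi c k u v <= Psi c k u' v'.
Proof.
  revert u v u' v'; induction k as [|k IH]; intros u v u' v' Hu Hv.
  - simpl. unfold Psi0. Rcases.
  - rewrite !Psi_succ. apply RInt_le; [lra | apply ex_RInt_Psi | apply ex_RInt_Psi |].
    intros s _. apply IH; lra.
Qed.

Lemma RInt_le_Psi_succ c k u v p q : -1 <= p <= q -> q <= 1 ->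
  RInt (fun s => Psi c k (u - Rabs s) (v - Rabs (s - c k))) p q <= Psi c (S k) u v.
Proof.
  intros Hp Hq. rewrite Psi_succ.
  set (f := fun s => Psi c k (u - Rabs s) (v - Rabs (s - c k))).
  assert (Hf : forall a b, a <= b -> 0 <= RInt f a b)
    by (intros; apply RInt_ge_0; [lra | apply ex_RInt_Psi | intros; apply Psi_ge0]).
  rewrite <- (RInt_Chasles f (-1) p 1), <- (RInt_Chasles f p q 1) by apply ex_RInt_Psi.
  pose proof (Hf (-1) p). pose proof (Hf q 1). unfold plus; simpl. lra.
Qed.

Lemma l1norm_ge0 c n : 0 <= l1norm c n.
Proof. induction n; simpl; [lra | pose proof (Rabs_pos (c n)); lra]. Qed.

Lemma Rabs_le_l1norm c n i : (i < n)%nat -> Rabs (c i) <= l1norm c n.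
Proof.
  induction n as [|n IH]; intros Hi; [lia|]. simpl.
  pose proof (l1norm_ge0 c n). pose proof (Rabs_pos (c n)).
  destruct (Nat.eq_dec i n) as [->|Hne]; [lra|]. specialize (IH ltac:(lia)). lra.
Qed.

Lemma Psi_lower_bound c k d u v : 0 < d <= 1 ->
  (forall i, (i < k)%nat -> 0 <= c i <= 1) ->
  l1norm c k + INR k * d <= u -> INR k * d <= v -> d ^ k <= Psi c k u v.
Proof.
  intros Hd; revert u v; induction k as [|k IH]; intros u v Hc Hu Hv.
  - simpl in *. unfold Psi0. Rcases.
  - destruct (Hc k ltac:(lia)) as [ck0 ck1].
    simpl l1norm in Hu. rewrite Rabs_pos_eq in Hu by exact ck0. rewrite S_INR in Hu, Hv.
    eapply Rle_trans; [|apply (RInt_le_Psi_succ c k u v (c k - d) (c k)); lra].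
    apply Rle_trans with (RInt (fun _ => d ^ k) (c k - d) (c k)).
    + rewrite RInt_const. unfold scal; simpl; unfold mult; simpl. lra.
    + apply RInt_le; [lra | apply ex_RInt_const | apply ex_RInt_Psi |].
      intros s Hs. apply IH; [intros i Hi; apply Hc; lia | |].
      * pose proof (proj2 (Rabs_le_between s (c k + d)) ltac:(lra)). lra.
      * pose proof (proj2 (Rabs_le_between' s (c k) d) ltac:(lra)). lra.
Qed.

Lemma Psi_scaling c k a b u v : 0 < a -> 0 <= b -> a + b <= 1 ->
  (forall i, (i < k)%nat -> 0 <= c i <= 1) ->
  a ^ k * Psi c k u v <= Psi c k (a * u + b * l1norm c k) (a * v + (1 - a - b) * l1norm c k).
Proof.
  intros Ha Hb Hab; revert u v; induction k as [|k IH]; intros u v Hc.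
  - simpl. rewrite Rmult_1_l, !Rmult_0_r, !Rplus_0_r. unfold Psi0.
    repeat destruct Rle_dec; try lra;
      repeat match goal with H : ~ _ <= _ |- _ => apply Rnot_le_lt in H end; nra.
  - destruct (Hc k ltac:(lia)) as [ck0 ck1].
    simpl l1norm. rewrite Rabs_pos_eq by exact ck0. rewrite (Psi_succ c k u v).
    set (C := l1norm c k). set (ck := c k) in *.
    set (U := a * u + b * (C + ck)). set (V := a * v + (1 - a - b) * (C + ck)).
    set (g := fun s => Psi c k (U - Rabs s) (V - Rabs (s - ck))).
    (* substitute s = a y + b c_k in the integral defining Psi_{k+1}(U, V) *)
    assert (0 <= b * ck <= b) by (split; nra).
    eapply Rle_trans; [|apply (RInt_le_Psi_succ c k U V (a * -1 + b * ck) (a * 1 + b * ck)); lra].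
    rewrite <- (RInt_comp_lin g) by apply ex_RInt_Psi.
    set (f := fun s => Psi c k (u - Rabs s) (v - Rabs (s - ck))).
    replace (a ^ S k * RInt f (-1) 1) with (RInt (fun y => a ^ S k * f y) (-1) 1)
      by exact (RInt_scal f (-1) 1 (a ^ S k) (ex_RInt_Psi _ _ _ _ _ _ _)).
    apply RInt_le; [lra | exact (ex_RInt_scal f _ _ _ (ex_RInt_Psi _ _ _ _ _ _ _)) |
      exact (ex_RInt_comp_lin g _ _ _ _ (ex_RInt_Psi _ _ _ _ _ _ _)) |].
    intros y _. unfold scal, f, g; simpl; unfold mult; simpl. rewrite Rmult_assoc.
    apply Rmult_le_compat_l; [lra|].
    eapply Rle_trans; [apply IH; intros i Hi; apply Hc; lia|]. fold C.
    apply Psi_monotone.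
    + assert (Rabs (a * y + b * ck) <= a * Rabs y + b * ck).
      { eapply Rle_trans; [apply Rabs_triang|].
        rewrite !Rabs_mult, (Rabs_pos_eq a), (Rabs_pos_eq b), (Rabs_pos_eq ck) by lra. lra. }
      unfold U. lra.
    + assert (Rabs (a * y + b * ck - ck) <= a * Rabs (y - ck) + (1 - a - b) * ck).
      { replace (a * y + b * ck - ck) with (a * (y - ck) + - ((1 - a - b) * ck)) by ring.
        eapply Rle_trans; [apply Rabs_triang|].
        rewrite Rabs_Ropp, !Rabs_mult, (Rabs_pos_eq a), (Rabs_pos_eq (1 - a - b)), (Rabs_pos_eq ck)
          by lra. lra. }
      unfold V. lra.
Qed.

Lemma Psi_dilation c n r la :
  (forall i, (i < n)%nat -> 0 <= c i <= 1) -> l1norm c n <= r -> r <= 1 -> 1 <= la ->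
  (/ (2 * la - 1)) ^ n * Psi c n la (r * la) <= Psi c n 1 r.
Proof.
  intros Hc HCr Hr Hla.
  pose proof (l1norm_ge0 c n) as HC.
  set (a := / (2 * la - 1)). set (C := l1norm c n) in *.
  assert (Ha : 0 < a) by (apply Rinv_0_lt_compat; lra).
  assert (Hala : a * (2 * la - 1) = 1) by (unfold a; field; lra).
  assert (Hb : 0 <= a * (la - 1)) by nra.
  assert (Hg : 0 <= 1 - a * la) by nra.
  (* b = a (la - 1) is the choice that sends (la, r la) exactly to (1, r) when C = r = 1 *)
  eapply Rle_trans; [apply (Psi_scaling c n a (a * (la - 1))); auto; nra|].
  assert (a * (la - 1) * C <= a * (la - 1) * 1) by (apply Rmult_le_compat_l; lra).
  assert ((1 - a * la) * C <= (1 - a * la) * r) by (apply Rmult_le_compat_l; lra).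
  apply Psi_monotone; fold C; nra.
Qed.

Theorem mainTheorem17 (n : nat) (c : nat -> R) (r M : R)
  (hc : forall i : nat, (i < n)%nat -> 0 <= c i)
  (hr0 : 0 < r) (hr1 : r <= 1)
  (hcr : l1norm c n <= r)
  (hM : 0 < M) :
  Psi c n 1 r / Psi c n (1 + INR n / M) (r * (1 + INR n / M))
    >= (M / (M + INR n)) ^ (2 * n).
Proof.
  assert (Hc : forall i, (i < n)%nat -> 0 <= c i <= 1).
  { intros i Hi. pose proof (Rabs_le_l1norm c n i Hi). rewrite Rabs_pos_eq in H by auto.
    split; [auto | lra]. }
  pose proof (pos_INR n) as Hn.
  set (t := INR n / M). set (la := 1 + t).
  assert (Ht : 0 <= t) by (apply Rdiv_le_0_compat; lra).
  assert (Hpos : 0 < Psi c n la (r * la)).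
  { set (d := Rmin 1 (r / M)).
    assert (Hd : 0 < d <= 1)
      by (split; [apply Rmin_glb_lt; [lra | apply Rdiv_lt_0_compat; lra] | apply Rmin_l]).
    assert (Hnd : INR n * d <= t * r).
    { replace (t * r) with (INR n * (r / M)) by (unfold t; field; lra).
      apply Rmult_le_compat_l; [lra | apply Rmin_r]. }
    apply Rlt_le_trans with (d ^ n); [apply pow_lt; lra|].
    apply Psi_lower_bound; auto; unfold la; nra. }
  apply Rle_ge, Rle_div_r; [lra|].
  eapply Rle_trans; [|apply (Psi_dilation c n r la); auto; unfold la; lra].
  apply Rmult_le_compat_r; [lra|].
  rewrite pow_mult. apply pow_incr. split; [apply pow2_ge_0|].
  replace ((M / (M + INR n)) ^ 2) with (/ (la * la)) by (unfold la, t; field; lra).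
  apply Rinv_le_contravar; unfold la; nra.
Qed.
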